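(* Let $X,Y$ be $T_0$ spaces and $f:X\to Y$ a continuous map. The following are equivalent: (1) $f$ is continuous as a map from $(X,\mathcal{O}_{SI_2}(X))$ to $(Y,\mathcal{O}_{SI_2}(Y))$. (2) For every net $(x_i)_{i\in I}$ in $X$ and $x\in X$, if $(x_i)_{i\in I}$ $GSI_2$-converges to $x$ in $X$, then $(f(x_i))_{i\in I}$ $GSI_2$-converges to $f(x)$ in $Y$.
   Context: For a $T_0$ space $X$, the specialization order is $x\le y$ iff $x\in \mathrm{cl}\{y\}$; $\uparrow A=\{x: a\le x\text{ for some } a\in A\}$, $\uparrow x=\uparrow\{x\}$; $A^\uparrow$, $A^\downarrow$ are the sets of upper and lower bounds of $A$, and $A^\delta=(A^\uparrow)^\downarrow$. A nonempty $A\subseteq X$ is irreducible if whenever $A\subseteq F_1\cup F_2$ with $F_1,F_2$ closed, $A\subseteq F_1$ or $A\subseteq F_2$. $X^{(<\omega)}$ is the set of nonempty finite subsets of $X$. $P_S(X)$ is the set of nonempty compact saturated (upper) subsets of $X$ with the upper Vietoris topology, basis $\{\square U: U\text{ open}\}$, $\square U=\{Q: Q\subseteq U\}$. A net is eventually in $U$ if from some index on all its terms lie in $U$. $U\subseteq X$ is $SI_2$-open if $U$ is open and for every irreducible $F$, $F^\delta\cap U\ne\emptyset$ implies $F\cap U\neq\emptyset$; these form the topology $\mathcal{O}_{SI_2}(X)$. A net $(x_i)_{i\in I}$ $GSI_2$-converges to $x$ in $X$ if there exists $\mathcal F\subseteq X^{(<\omega)}$ with $\{\uparrow F: F\in\mathcal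 F\}$ irreducible in $P_S(X)$ such that (i) for every open $U$ of $X$, if $\uparrow F\subseteq U$ for some $F\in\mathcal F$ then $x_i\in U$ eventually, and (ii) $\bigcap_{F\in\mathcal F}\uparrow F\subseteq\uparrow x$. *)

From HB Require Import structures.
From mathcomp Require Import all_boot all_order.
From mathcomp Require Import all_classical all_reals all_analysis.
Set Implicit Arguments. Unset Strict Implicit. Unset Printing Implicit Defensive.
Local Open Scope classical_set_scope.

Section Defs.
Context {X : topologicalType}.

Definition spec_le (x y : X) : Prop := closure [set y] x.

Definition upset (A : set X) : set X := [set x | exists2 a, A a & spec_le a x].
Definition upper_bounds (A : set X) : set X := [set y | forall a, A a -> spec_le a y].
Definition lower_bounds (A : set X) : set X := [set y | forall a, A a -> spec_le y a].
Definition delta (A : set X) : set X := lower_bounds (upper_bounds A).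

Definition irreducible (A : set X) : Prop :=
  A !=set0 /\ forall F1 F2 : set X, closed F1 -> closed F2 ->
    A `<=` F1 `|` F2 -> A `<=` F1 \/ A `<=` F2.

Definition saturated (A : set X) : Prop := forall x y, A x -> spec_le x y -> A y.

Definition PS (Q : set X) : Prop := Q !=set0 /\ compact Q /\ saturated Q.

Definition box (U : set X) : set (set X) := [set Q | PS Q /\ Q `<=` U].

(* open sets of the upper Vietoris topology on P_S(X) (subsets of P_S(X)):
   unions of basic opens box U, U open *)
Definition UV_open (W : set (set X)) : Prop :=
  W `<=` PS /\ forall Q, W Q -> exists2 U, open U & box U Q /\ box U `<=` W.

Definition UV_closed (C : set (set X)) : Prop :=
  C `<=` PS /\ UV_open (PS `\` C).

Definition UV_irreducible (A : set (set X)) : Prop :=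
  A `<=` PS /\ A !=set0 /\ forall C1 C2, UV_closed C1 -> UV_closed C2 ->
    A `<=` C1 `|` C2 -> A `<=` C1 \/ A `<=` C2.

Definition SI2_open (U : set X) : Prop :=
  open U /\ forall F, irreducible F -> delta F `&` U !=set0 -> F `&` U !=set0.

Definition directed {I : Type} (le : I -> I -> Prop) : Prop :=
  (forall i, le i i) /\ (forall i j k, le i j -> le j k -> le i k) /\
  inhabited I /\ (forall i j, exists k, le i k /\ le j k).

Definition eventually_in {I : Type} (le : I -> I -> Prop) (s : I -> X) (U : set X) :=
  exists i0, forall i, le i0 i -> U (s i).

Definition fin_nonempty (F : set X) : Prop := finite_set F /\ F !=set0.

Definition GSI2_converges {I : Type} (le : I -> I -> Prop) (s : I -> X) (x : X) : Prop :=
  exists FF : set (set X),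
    FF `<=` fin_nonempty /\
    UV_irreducible (upset @` FF) /\
    (forall U : set X, open U -> (exists2 F, FF F & upset F `<=` U) ->
        eventually_in le s U) /\
    \bigcap_(F in FF) upset F `<=` upset [set x].

End Defs.

Definition SI2_continuous {X Y : topologicalType} (f : X -> Y) : Prop :=
  forall V : set Y, SI2_open V -> SI2_open (f @^-1` V).

From mathcomp Require Import all_boot all_order.
From mathcomp Require Import all_classical all_reals all_analysis.
Local Open Scope classical_set_scope.

(** The heart of the matter: an SI2-open [V] containing a GSI2-limit [y] of a
    family [FF] already contains some [upset F] with [F] in [FF]. Otherwise every
    [F] meets the closed set [~` V], and the topological Rudin lemma yields an
    irreducible [A] inside [~` V] meeting every [F]; every upper bound of [A] is
    then above [y], so [y] lies in [delta A `&` V] and SI2-openness makes [A]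
    meet [V].

    (1) -> (2): push the family forward along [f]. Irreducibility in P_S
    survives because [K |-> upset (f @` K)] is continuous for the upper Vietoris
    topologies; and if [f x] were not below some [y] lying in every
    [upset (f @` F)], the fact above applied to the SI2-open preimage of
    [~` closure [set y]] would give a contradiction.

    (2) -> (1): for irreducible [A] and [x] in [delta A], choosing a point of [A]
    in each open set meeting [A] gives a net (directed by irreducibility) that
    GSI2-converges to [x] through the singletons of [A]; by (2) and the fact
    above, its image eventually enters any SI2-open [V] containing [f x]. *)

Lemma finite_sub_chain {T : eqType} (G : set (set T)) (S : set T) :
  G !=set0 -> total_on G subset -> finite_set S ->
  S `<=` \bigcup_(U in G) U -> exists2 U, G U & S `<=` U.
Proof.
move=> [U0 GU0] Gtot /finite_seqP[s ->]; elim: s => [|a s IH] sG.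
  by exists U0.
have [U1 GU1 sU1] : exists2 U, G U & [set` s] `<=` U.
  by apply: IH => x sx; apply: sG; rewrite /= in_cons sx orbT.
have [U2 GU2 aU2] : (\bigcup_(U in G) U) a by apply: sG; rewrite /= mem_head.
have [U12|U21] := Gtot _ _ GU1 GU2.
- by exists U2 => // x; rewrite /= in_cons => /orP[/eqP->//|/sU1/U12].
- by exists U1 => // x; rewrite /= in_cons => /orP[/eqP->|/sU1]//; apply: U21.
Qed.

Section Specialization.
Context {X : topologicalType}.
Implicit Types (x y z : X) (A U D : set X).

Lemma spec_leP x y : spec_le x y <-> forall U, open U -> U x -> U y.
Proof.
split.
- move=> xy U oU Ux.
  by have /xy [z [/= -> Uz]] // : nbhs x U by apply: open_nbhs_nbhs.
- move=> xy B; rewrite nbhsE => -[U [oU Ux] UB].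
  by exists y; split => //; apply: UB; exact: xy.
Qed.

Lemma spec_le_refl x : spec_le x x.
Proof. by rewrite spec_leP. Qed.

Lemma spec_le_trans x y z : spec_le x y -> spec_le y z -> spec_le x z.
Proof. by rewrite !spec_leP => xy yz U oU /xy-/(_ oU)/yz; apply. Qed.

Lemma open_spec_le U x y : open U -> U x -> spec_le x y -> U y.
Proof. by move=> oU Ux /spec_leP; apply. Qed.

Lemma closed_spec_le D x y : closed D -> D y -> spec_le x y -> D x.
Proof.
move=> cD Dy xy; apply: contrapT => nDx.
by apply: (@open_spec_le (~` D) x y) => //; rewrite openC.
Qed.

Lemma sub_upset A : A `<=` upset A.
Proof. by move=> a Aa; exists a => //; exact: spec_le_refl. Qed.

Lemma upset1P x y : upset [set x] y <-> spec_le x y.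
Proof. by split => [[_ -> //]|]; exists x. Qed.

Lemma saturated_upset A : saturated (upset A).
Proof. by move=> y z [a Aa ay] yz; exists a => //; exact: spec_le_trans yz. Qed.

Lemma open_upset_sub U A : open U -> A `<=` U -> upset A `<=` U.
Proof. by move=> oU AU y [a /AU Ua ay]; exact: open_spec_le ay. Qed.

Lemma closed_upset_meet D A :
  closed D -> upset A `&` D !=set0 -> A `&` D !=set0.
Proof.
by move=> cD [y [[a Aa ay] Dy]]; exists a; split => //; exact: closed_spec_le ay.
Qed.

Lemma compact_upset1 x : compact (upset [set x]).
Proof.
move=> F PF Fx; exists x; split; first exact/upset1P/spec_le_refl.
move=> B W FB; rewrite nbhsE => -[U [oU Ux] UW].
have /filter_ex [z [Bz /upset1P xz]] : F (B `&` upset [set x]) by apply: filterI.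
by exists z; split => //; apply: UW; exact: open_spec_le xz.
Qed.

Lemma compact_upset_finite A : finite_set A -> compact (upset A).
Proof.
move=> /finite_seqP[s ->].
have -> : upset [set` s] = \bigcup_(a in [set` s]) upset [set a].
  by apply/seteqP; split => y [a sa /upset1P ay]; exists a.
rewrite bigcup_seq; apply: bigsetU_compact => a _; exact: compact_upset1.
Qed.

Lemma PS_upset A : fin_nonempty A -> PS (upset A).
Proof.
move=> [finA [a Aa]]; split; last split.
- by exists a; exact: sub_upset.
- exact: compact_upset_finite.
- exact: saturated_upset.
Qed.

Lemma PS_upset1 x : PS (upset [set x]).
Proof. by apply: PS_upset; split; [exact: finite_set1|exists x]. Qed.

End Specialization.

Section ContinuousImage.
Context {X Y : topologicalType} (f : X -> Y).
Hypothesis fc : continuous f.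

Lemma continuous_spec_le a b : spec_le a b -> spec_le (f a) (f b).
Proof.
move=> /spec_leP ab; apply/spec_leP => W oW.
exact: ab (f @^-1` W) ((continuousP f).1 fc W oW).
Qed.

Lemma image_upset_sub A : f @` upset A `<=` upset (f @` A).
Proof.
by move=> _ [b [a Aa ab] <-]; exists (f a); [exists a|exact: continuous_spec_le].
Qed.

Lemma upset_image_upset A : upset (f @` upset A) = upset (f @` A).
Proof.
apply/seteqP; split => y [_ [a Aa <-] ay].
- have [c fAc cfa] := @image_upset_sub A _ (ex_intro2 _ _ a Aa erefl).
  by exists c => //; exact: spec_le_trans ay.
- by exists (f a) => //; exists a => //; exact: sub_upset.
Qed.

(* The preimage of [C] under [K |-> upset (f @` K)], phrased so that it is
   UV-closed without knowing that [upset (f @` K)] is compact. *)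
Definition UV_preimage (C : set (set Y)) : set (set X) :=
  [set K | PS K /\ forall W, open W -> f @` K `<=` W -> box W `&` C !=set0].

Lemma UV_closed_preimage C : UV_closed (UV_preimage C).
Proof.
split; first by move=> K [].
split; first by move=> K [].
move=> K [PK nK].
have [W oW [fKW nC]] :
    exists2 W, open W & f @` K `<=` W /\ ~ (box W `&` C !=set0).
  apply: contrapT => h; apply: nK; split => // W oW fKW.
  by apply: contrapT => nC; apply: h; exists W.
exists (f @^-1` W); first exact: (continuousP f).1 fc W oW.
split; first by split => // a Ka; apply: fKW; exists a.
move=> Q [PQ QW]; split => // -[_ /(_ W oW) QC]; apply/nC/QC.
by move=> _ [a Qa <-]; exact: QW.
Qed.

Lemma UV_preimageP C K : UV_closed C -> PS K -> PS (upset (f @` K)) ->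
  UV_preimage C K <-> C (upset (f @` K)).
Proof.
move=> [_ [_ oC]] PK PfK; split.
- move=> [_ meetC]; apply: contrapT => nC.
  have [W oW [[_ fKW] WC]] := oC _ (conj PfK nC).
  have [Q [WQ CQ]] := meetC W oW (subset_trans (@sub_upset _ _) fKW).
  by have [] := WC Q WQ.
- move=> CfK; split => // W oW fKW; exists (upset (f @` K)).
  by split => //; split => //; exact: open_upset_sub.
Qed.

Lemma UV_irreducible_image A : UV_irreducible A ->
  (forall K, A K -> PS (upset (f @` K))) ->
  UV_irreducible [set upset (f @` K) | K in A].
Proof.
move=> [APS [[K0 AK0] Airr]] PSfA.
split; first by move=> _ [K AK <-]; exact: PSfA.
split; first by exists (upset (f @` K0)), K0.
move=> C1 C2 cC1 cC2 fAC.
have preimP C K : UV_closed C -> A K ->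
    UV_preimage C K <-> C (upset (f @` K)).
  by move=> cC AK; apply: UV_preimageP => //; [exact: APS|exact: PSfA].
have : A `<=` UV_preimage C1 `|` UV_preimage C2.
  move=> K AK; have [C1K|C2K] := fAC _ (ex_intro2 _ _ K AK erefl).
  - by left; apply/(preimP _ _ cC1 AK).
  - by right; apply/(preimP _ _ cC2 AK).
case/(Airr _ _ (UV_closed_preimage C1) (UV_closed_preimage C2)) => AsubC;
  [left|right] => _ [K AK <-]; apply/(preimP _ _ _ AK) => //; exact: AsubC.
Qed.

End ContinuousImage.

Section TopologicalRudin.
Context {X : topologicalType}.

Definition PS_meeting (D : set X) : set (set X) :=
  [set K | PS K /\ K `&` D !=set0].

Lemma UV_closed_PS_meeting D : closed D -> UV_closed (PS_meeting D).
Proof.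
move=> cD; split; first by move=> K [].
split; first by move=> K [].
move=> K [PK nKD]; exists (~` D); first by rewrite openC.
split; first by split => // a Ka Da; apply: nKD; split => //; exists a.
by move=> Q [PQ QD]; split => // -[_ [a [Qa Da]]]; exact: QD Qa Da.
Qed.

Variables (FF : set (set X)) (C : set X).
Hypotheses (FFfin : FF `<=` fin_nonempty) (FFirr : UV_irreducible (upset @` FF))
  (cC : closed C) (FFC : forall F, FF F -> F `&` C !=set0).

(* Zorn's lemma gives a maximal [U] in [avoiding]; [C `\` U] is the
   irreducible set. Finiteness of the [F] makes [avoiding] chain-complete. *)
Let avoiding : set (set X) :=
  [set U | open U /\ forall F, FF F -> F `&` (C `\` U) !=set0].

Let avoiding_chain G : G `<=` avoiding -> total_on G subset ->
  avoiding (\bigcup_(U in G) U).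
Proof.
move=> Gav Gtot; split; first by apply: bigcup_open => U /Gav[].
move=> F FF_F; apply: contrapT => nFCG.
have FCG : F `&` C `<=` \bigcup_(U in G) U.
  by move=> a [Fa Ca]; apply: contrapT => nGa; apply: nFCG; exists a.
have [a FCa] := FFC F FF_F.
have [||U GU FCU] := finite_sub_chain _ _ _ Gtot _ FCG.
- by have [U GU _] := FCG a FCa; exists U.
- exact: finite_setIl (FFfin F FF_F).1.
have [b [Fb [Cb nUb]]] := (Gav U GU).2 F FF_F.
exact/nUb/FCU.
Qed.

Let avoiding_maximal U D : avoiding U -> (forall V, U `<` V -> ~ avoiding V) ->
  closed D -> ~ (C `\` U `<=` D) ->
  exists2 F, FF F & ~ (F `&` ((C `\` U) `&` D) !=set0).
Proof.
move=> [oU _] Umax cD nCUD.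
have [a [Ca nUa] nDa] : exists2 a, (C `\` U) a & ~ D a.
  apply: contrapT => h; apply: nCUD => a CUa.
  by apply: contrapT => nDa; apply: h; exists a.
have UV : U `<` U `|` ~` D by split => [z Uz|VU]; [left|apply/nUa/VU; right].
apply: contrapT => h; apply: (Umax _ UV); split.
  by apply: openU => //; rewrite openC.
move=> F FF_F; apply: contrapT => nF; apply: h; exists F => //.
move=> [b [Fb [[Cb nUb] Db]]]; apply: nF; exists b; split => //.
by split => // -[].
Qed.

Lemma topological_rudin :
  exists A, irreducible A /\ A `<=` C /\ forall F, FF F -> F `&` A !=set0.
Proof.
have [U [avU Umax]] := Zorn_bigcup avoiding_chain.
have [_ [[_ [F0 FF_F0 _]] FFirr']] := FFirr.
have cCU : closed (C `\` U) by apply: closedI => //; rewrite closedC; exact: avU.1.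
exists (C `\` U); split; last by split => [a []|]; last exact: avU.2.
split; first by have [a [_ ?]] := avU.2 F0 FF_F0; exists a.
move=> D1 D2 cD1 cD2 CUD; apply: contrapT => /not_orP[nD1 nD2].
have [F1 FF_F1 nF1] := avoiding_maximal _ _ avU Umax cD1 nD1.
have [F2 FF_F2 nF2] := avoiding_maximal _ _ avU Umax cD2 nD2.
have meets Fi Di : closed Di -> FF Fi ->
    upset @` FF `<=` PS_meeting ((C `\` U) `&` Di) ->
    Fi `&` ((C `\` U) `&` Di) !=set0.
  move=> cDi FF_Fi /(_ _ (ex_intro2 _ _ Fi FF_Fi erefl))[_].
  by apply: closed_upset_meet; exact: closedI.
have : upset @` FF `<=`
    PS_meeting ((C `\` U) `&` D1) `|` PS_meeting ((C `\` U) `&` D2).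
  move=> _ [F FF_F <-]; have PF : PS (upset F) by apply/PS_upset/FFfin.
  have [a [Fa CUa]] := avU.2 F FF_F.
  by have [D1a|D2a] := CUD a CUa; [left|right]; split => //;
    exists a; split => //; exact: sub_upset.
case/(FFirr' _ _ (UV_closed_PS_meeting _ (closedI cCU cD1))
                  (UV_closed_PS_meeting _ (closedI cCU cD2))).
- by move/(meets _ _ cD1 FF_F1).
- by move/(meets _ _ cD2 FF_F2).
Qed.

End TopologicalRudin.

Section SI2Open.
Context {X : topologicalType}.

Lemma SI2_open_setC_closure1 (y : X) : SI2_open (~` closure [set y]).
Proof.
split; first by rewrite openC; exact: closed_closure.
move=> A irrA [z [dAz nyz]]; apply: contrapT => nAV; apply/nyz/dAz.
by move=> a Aa; apply: contrapT => nya; apply: nAV; exists a.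
Qed.

Lemma SI2_open_upset_sub {FF : set (set X)} {V : set X} {y : X} :
  SI2_open V -> FF `<=` fin_nonempty -> UV_irreducible (upset @` FF) ->
  \bigcap_(F in FF) upset F `<=` upset [set y] -> V y ->
  exists2 F, FF F & upset F `<=` V.
Proof.
move=> [oV SI2V] FFfin FFirr FFy Vy; apply: contrapT => nFV.
have cnV : closed (~` V) by rewrite closedC.
have FnV F : FF F -> F `&` ~` V !=set0.
  move=> FF_F; apply: contrapT => nFnV; apply: nFV; exists F => //.
  apply: open_upset_sub => // a Fa.
  by apply: contrapT => nVa; apply: nFnV; exists a.
have [A [irrA [AnV AF]]] := topological_rudin _ _ FFfin FFirr cnV FnV.
have dAy : delta A y.
  move=> u Au; apply/upset1P/FFy => F FF_F.
  by have [a [Fa Aa]] := AF F FF_F; exists a => //; exact: Au.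
have [a [Aa Va]] := SI2V A irrA (ex_intro _ y (conj dAy Vy)).
exact: AnV Aa Va.
Qed.

End SI2Open.

Section IrreducibleNet.
Context {X : topologicalType} (A : set X).

Lemma irreducible_meetI U1 U2 : irreducible A -> open U1 -> open U2 ->
  A `&` U1 !=set0 -> A `&` U2 !=set0 -> A `&` (U1 `&` U2) !=set0.
Proof.
move=> [_ Airr] oU1 oU2 [a1 [Aa1 U1a1]] [a2 [Aa2 U2a2]].
apply: contrapT => nA12.
have cU1 : closed (~` U1) by rewrite closedC.
have cU2 : closed (~` U2) by rewrite closedC.
have : A `<=` ~` U1 `|` ~` U2.
  move=> a Aa; apply: contrapT => /not_orP[/contrapT U1a /contrapT U2a].
  by apply: nA12; exists a.
by case/(Airr _ _ cU1 cU2) => AU; [exact: AU a1 Aa1 U1a1|exact: AU a2 Aa2 U2a2].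
Qed.

Lemma closed_principal_preimage (C : set (set X)) :
  UV_closed C -> closed [set a | C (upset [set a])].
Proof.
move=> [_ [_ oC]]; rewrite -openC openE /= => a nCa.
have [U oU [[_ aU] UC]] := oC _ (conj (PS_upset1 a) nCa).
have Ua : U a by apply: aU; exact: sub_upset.
apply: (filterS _ (open_nbhs_nbhs (conj oU Ua))) => b Ub.
have bU : upset [set b] `<=` U by apply: open_upset_sub => // _ ->.
by have [] := UC (upset [set b]) (conj (PS_upset1 b) bU).
Qed.

Lemma UV_irreducible_principal :
  irreducible A -> UV_irreducible (upset @` [set [set a] | a in A]).
Proof.
move=> [[a0 Aa0] Airr].
split; first by move=> _ [_ [a _ <-] <-]; exact: PS_upset1.
split; first by exists (upset [set a0]), [set a0] => //; exists a0.
move=> C1 C2 cC1 cC2 AC.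
have : A `<=` [set a | C1 (upset [set a])] `|` [set a | C2 (upset [set a])].
  by move=> a Aa; apply: AC; exists [set a] => //; exists a.
case/(Airr _ _ (closed_principal_preimage _ cC1) (closed_principal_preimage _ cC2))
  => AsubC; [left|right] => _ [_ [a Aa <-] <-]; exact: AsubC.
Qed.

Definition open_meeting := {U : set X | open U /\ A `&` U !=set0}.

Definition refines (i j : open_meeting) : Prop := sval j `<=` sval i.

Definition meeting_point (i : open_meeting) : X := sval (cid (svalP i).2).

Lemma meeting_pointP i : A (meeting_point i) /\ sval i (meeting_point i).
Proof. exact: svalP (cid (svalP i).2). Qed.

Lemma directed_refines : irreducible A -> directed refines.
Proof.
move=> irrA; have [[a Aa] _] := irrA.
split; first by move=> i.
split; first by move=> i j k ij jk; exact: subset_trans ij.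
split; first by constructor; exists setT; split; [exact: openT|exists a].
move=> [U1 [oU1 AU1]] [U2 [oU2 AU2]].
have AU12 := irreducible_meetI _ _ irrA oU1 oU2 AU1 AU2.
by exists (exist _ (U1 `&` U2) (conj (openI oU1 oU2) AU12)); split => z [].
Qed.

Lemma GSI2_converges_meeting_point x :
  irreducible A -> delta A x -> GSI2_converges refines meeting_point x.
Proof.
move=> irrA dAx; exists [set [set a] | a in A].
split; first by move=> _ [a _ <-]; split; [exact: finite_set1|exists a].
split; first exact: UV_irreducible_principal.
split.
- move=> U oU [_ [a Aa <-] aU].
  have AU : A `&` U !=set0 by exists a; split => //; apply: aU; exact: sub_upset.
  by exists (exist _ U (conj oU AU)) => i Ui; apply: Ui; exact: (meeting_pointP i).2.
- move=> y Ay; apply/upset1P/dAx => a Aa.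
  by apply/upset1P/Ay; exists a.
Qed.

End IrreducibleNet.

Section GSI2Image.
Context {X Y : topologicalType} (f : X -> Y).
Hypotheses (fc : continuous f) (SI2f : SI2_continuous f).

Lemma fin_nonempty_image F : fin_nonempty F -> fin_nonempty (f @` F).
Proof. by move=> [finF [a Fa]]; split; [exact: finite_image|exists (f a), a]. Qed.

Lemma bigcap_upset_image (FF : set (set X)) x :
  FF `<=` fin_nonempty -> UV_irreducible (upset @` FF) ->
  \bigcap_(F in FF) upset F `<=` upset [set x] ->
  \bigcap_(F in [set f @` F | F in FF]) upset F `<=` upset [set f x].
Proof.
move=> FFfin FFirr FFx y fFFy; apply: contrapT => /upset1P nxy.
have [F FF_F FV] := SI2_open_upset_sub (SI2f _ (SI2_open_setC_closure1 y))
  FFfin FFirr FFx nxy.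
have [_ [a Fa <-] fay] := fFFy (f @` F) (ex_intro2 _ _ F FF_F erefl).
by apply: (FV a) fay; exact: sub_upset.
Qed.

Lemma GSI2_converges_image I (le : I -> I -> Prop) (s : I -> X) x :
  GSI2_converges le s x -> GSI2_converges le (f \o s) (f x).
Proof.
move=> [FF [FFfin [FFirr [FFev FFx]]]].
exists [set f @` F | F in FF].
split; first by move=> _ [F FF_F <-]; apply/fin_nonempty_image/FFfin.
split.
  have -> : upset @` [set f @` F | F in FF] =
      [set upset (f @` K) | K in upset @` FF].
    by rewrite !image_comp; apply: eq_imagel => F _ /=; rewrite upset_image_upset.
  apply: UV_irreducible_image => // _ [F FF_F <-].
  by rewrite upset_image_upset //; apply/PS_upset/fin_nonempty_image/FFfin.
split; last exact: bigcap_upset_image.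
move=> V oV [_ [F FF_F <-] fFV].
have FV : upset F `<=` f @^-1` V.
  by move=> a Fa; apply: fFV; apply: (image_upset_sub _ fc); exists a.
exact: FFev (f @^-1` V) ((continuousP f).1 fc V oV) (ex_intro2 _ _ F FF_F FV).
Qed.

End GSI2Image.

Theorem proposition3p9 (X Y : topologicalType) (f : X -> Y) :
  kolmogorov_space X -> kolmogorov_space Y -> continuous f ->
  (SI2_continuous f <->
   (forall (I : Type) (le : I -> I -> Prop) (s : I -> X) (x : X),
      directed le -> GSI2_converges le s x ->
      GSI2_converges le (fun i => f (s i)) (f x))).
Proof.
move=> _ _ fc; split => [SI2f I le s x _|conv V [oV SI2V]].
  exact: GSI2_converges_image.
split; first exact: (continuousP f).1 fc V oV.
move=> A irrA [x [dAx Vfx]].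
have [FF [FFfin [FFirr [FFev FFfx]]]] := conv _ _ _ x (directed_refines _ irrA)
  (GSI2_converges_meeting_point _ x irrA dAx).
have [F FF_F FV] := SI2_open_upset_sub (conj oV SI2V) FFfin FFirr FFfx Vfx.
have [i0 i0V] := FFev V oV (ex_intro2 _ _ F FF_F FV).
exists (meeting_point A i0); split; first exact: (meeting_pointP _ i0).1.
exact/i0V/(directed_refines _ irrA).1.
Qed.
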